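(* Let $F|R$ be an extension of ordered fields with canonical valuation $v$ and assume that $vR$ is a convex subgroup of $vF$. Then the injective maps $\tilde\iota:\mathcal C(R)\to\mathcal C(F)$ that are continuous with respect to the full topologies and compatible with restriction are exactly the maps constructed as follows: for a non-ball cut $C=(D,E)$ of $R$, $\tilde\iota(C)$ is one of $D^{+}_F$ or $E^{-}_F$; if $C$ is the lower edge $B_0^-$ (resp. upper edge $B_0^+$) in $R$ of a ball $B_0\neq R$ with ball complement $(D,E)$ in $R$, then $\tilde\iota(C)=D^{+}_F$ (resp. $E^{-}_F$); and $\tilde\iota((\emptyset,R))=R^{-}_F$, $\tilde\iota((R,\emptyset))=R^{+}_F$.
   Context: The canonical valuation $v$ of an ordered field has as valuation ring the convex hull of $\mathbb Z$. For an ordered field $K$, a cut is a pair $(D,E)$ with $D<E$, $D\cup E=K$; $\mathcal C(K)$ is the set of cuts, ordered by $(D_1,E_1)<(D_2,E_2)$ iff $D_1\subsetneq D_2$. For nonempty $A\subseteq K$, $A^+=(D,K\setminus D)$ with $D$ the smallest initial segment containing $A$, and $A^-=(K\setminus E,E)$ with $E$ the smallest final segment containing $A$; for $A\subseteq R$, $A^{\pm}_F$ are these cuts taken in $F$. For $a\in K$ and a final segment $S$ of $vK$ (possibly empty), $B_S(a,K)=\{b\in K\mid v(a-b)\in S\cup\{\infty\}\}$ is a ball; a ball complement of a ball $B$ is $(D,E)$ with $D<B<E$, $D\cup B\cup E=K$. A cut is a ball cut if it is $B^+$ (upper edge) or $B^-$ (lower edge) of a ball $B$, otherwise a non-ball cut.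 Two cuts are equivalent if equal or the lower and upper edge of the same ball; a subset of $\mathcal C(K)$ is full if closed under equivalence. The interval topology on $\mathcal C(K)$ has basic open sets $(C_1,C_2)$, $(C_1,(K,\emptyset)]$, $[(\emptyset,K),C_2)$; the full topology consists of all full sets open in the interval topology. Restriction of a cut $(D',E')$ of $F$ to $R$ is $(D'\cap R,E'\cap R)$; $\tilde\iota$ is compatible with restriction if the restriction of $\tilde\iota(C)$ is $C$ for all $C$. *)

From HB Require Import structures.
From mathcomp Require Import all_boot all_order all_algebra.
From mathcomp Require Import boolp classical_sets.
Set Implicit Arguments. Unset Strict Implicit. Unset Printing Implicit Defensive.
Import Order.TTheory GRing.Theory Num.Theory.
Local Open Scope ring_scope.
Local Open Scope classical_set_scope.

Section OrderedFieldDefs.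
Variable K : realFieldType.

(* Canonical valuation v of K, through the order it induces:
   vle x y  <->  v x <= v y  (valuation ring = convex hull of Z).
   Includes 0: v 0 = oo. *)
Definition vle (x y : K) : Prop := exists n : nat, `|y| <= n%:R * `|x|.
Definition veq (x y : K) : Prop := vle x y /\ vle y x.

(* A cut (D, E) with D < E, D \cup E = K is determined by its lower part D,
   an initial segment of K; E is the complement of D. *)
Record cut := Cut { cutD : set K ;
                    cutP : forall x y, cutD x -> y <= x -> cutD y }.

Definition cut_lt (C1 C2 : cut) : Prop :=
  cutD C1 `<=` cutD C2 /\ cutD C1 <> cutD C2.

(* S is (the preimage under v of) a final segment of vK (possibly empty):
   a set of nonzero elements, upward closed for v. *)
Definition vfinal (S : set K) : Prop :=
  (forall x, S x -> x != 0) /\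
  (forall x y, S x -> y != 0 -> vle x y -> S y).

(* B_S(a,K) = { b | v(a-b) \in S \cup {oo} } *)
Definition ball_at (S : set K) (a : K) : set K :=
  [set b | b = a \/ S (a - b)].

Definition is_ball (B : set K) : Prop :=
  exists S a, vfinal S /\ B = ball_at S a.

(* Lower part of A^+ : smallest initial segment containing A *)
Definition upD (A : set K) : set K := [set x | exists2 a, A a & x <= a].
(* Lower part of A^- : complement of the smallest final segment containing A *)
Definition lowD (A : set K) : set K := [set x | forall a, A a -> x < a].

Definition ball_cut (C : cut) : Prop :=
  exists B, is_ball B /\ (cutD C = upD B \/ cutD C = lowD B).

Definition ball_complement (B D E : set K) : Prop :=
  [/\ (forall d b, D d -> B b -> d < b),
      (forall b e, B b -> E e -> b < e) &
      (forall x, D x \/ B x \/ E x)].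

Definition cut_equiv (C1 C2 : cut) : Prop :=
  C1 = C2 \/
  exists B, is_ball B /\
    ((cutD C1 = lowD B /\ cutD C2 = upD B) \/
     (cutD C1 = upD B /\ cutD C2 = lowD B)).

Definition full (U : set cut) : Prop :=
  forall C1 C2, U C1 -> cut_equiv C1 C2 -> U C2.

Definition basic_open (U : set cut) : Prop :=
  (exists C1 C2, U = [set C | cut_lt C1 C /\ cut_lt C C2]) \/
  (exists C1, U = [set C | cut_lt C1 C]) \/
  (exists C2, U = [set C | cut_lt C C2]).

Definition interval_open (U : set cut) : Prop :=
  forall C, U C -> exists V, [/\ basic_open V, V C & V `<=` U].

Definition full_open (U : set cut) : Prop := full U /\ interval_open U.

End OrderedFieldDefs.

Section ExtensionDefs.
Variables (R F : realFieldType) (i : R -> F).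

(* lower part of A^+_F, for A a subset of R *)
Definition ext_upD (A : set R) : set F := [set y | exists2 a, A a & y <= i a].
(* lower part of A^-_F, for A a subset of R *)
Definition ext_lowD (A : set R) : set F := [set y | forall a, A a -> y < i a].

Definition restrict (C : cut F) : set R := [set r | cutD C (i r)].

Definition full_continuous (f : cut R -> cut F) : Prop :=
  forall U : set (cut F), full_open U -> full_open (f @^-1` U).
End ExtensionDefs.

(* Compatibility with restriction pins [iota (D, E)] between [D^+_F] and [E^-_F].
   These two cuts of [F] either coincide or are the two edges of one ball of
   [F]: the gap between [i D] and [i E] for a non-ball cut, the image of the
   ball [B] for an edge of [B], the convex hull of [i R] for the extreme cuts.
   Necessity: if [iota C] lay strictly inside (or outside) that ball, the
   preimage of the full open set of cuts inside (outside) it would be an open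
   neighbourhood of [C]; for a non-ball cut it would be the singleton [{C}],
   which is open only for ball cuts, and otherwise the images of the nearby cuts
   [(-oo, x]] would fall on the wrong side of the edge.
   Sufficiency: the prescribed map sends equivalent cuts to equivalent ones, so
   preimages of full sets are full; openness is transferred through half
   neighbourhoods of [iota C] or of its equivalent cut. For the edges of a ball
   [B_S(a)] with [S] nonempty the two candidate images coincide: the convexity
   of [v R] in [v F] makes the image ball the convex hull of [i B_S(a)]. *)

From HB Require Import structures.
From mathcomp Require Import all_boot all_order all_algebra.
From mathcomp Require Import boolp classical_sets.
From mathcomp Require Import ring lra.
Import Order.TTheory GRing.Theory Num.Theory.
Local Open Scope ring_scope.
Local Open Scope classical_set_scope.
Set Implicit Arguments. Unset Strict Implicit. Unset Printing Implicit Defensive.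

Lemma nat_transition (P : nat -> Prop) n : P 0%N -> ~ P n -> exists k, P k /\ ~ P k.+1.
Proof.
elim: n => [//|n IH] h0 hn.
by case: (pselect (P n)) => hPn; [exists n|exact: IH].
Qed.

(** * Valuations and balls *)

Section Balls.
Variable K : realFieldType.
Implicit Types (x y z a b c e t u v w : K) (S T B D E : set K).

Lemma normr_cases x : (0 <= x /\ `|x| = x) \/ (x < 0 /\ `|x| = - x).
Proof.
by case: (lerP 0 x) => h; [left; split=> //; exact: ger0_norm|right; split=> //; exact: ltr0_norm].
Qed.

Lemma norm_le_vle x y : `|y| <= `|x| -> vle x y.
Proof. by move=> h; exists 1%N; rewrite mul1r. Qed.

Lemma vle_refl x : vle x x. Proof. exact: norm_le_vle. Qed.

Lemma vle_trans x y z : vle x y -> vle y z -> vle x z.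
Proof.
move=> [n hn] [m hm]; exists (m * n)%N; rewrite natrM -mulrA.
by apply: (le_trans hm); apply: ler_wpM2l.
Qed.

Lemma vle_total x y : vle x y \/ vle y x.
Proof.
case: (lerP `|y| `|x|) => h; [left|right]; apply: norm_le_vle => //; exact: ltW.
Qed.

Lemma vle0l y : vle 0 y -> y = 0.
Proof. by move=> [n]; rewrite normr0 mulr0 normr_le0 => /eqP. Qed.

Lemma vleNr x y : vle x (- y) <-> vle x y.
Proof. by split=> -[n h]; exists n; move: h; rewrite normrN. Qed.

Lemma vle_add x y : vle x (x + y) \/ vle y (x + y).
Proof.
have le2 u w : `|w| <= `|u| -> `|u + w| <= 2%:R * `|u|.
  by move=> h; apply: (le_trans (ler_normD _ _)); rewrite mulr2n mulrDl mul1r lerD.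
case: (lerP `|y| `|x|) => h; [left|right]; exists 2%N; first exact: le2.
by rewrite addrC; apply: le2; exact: ltW.
Qed.

Lemma vle_half x : vle (x / 2) x.
Proof.
exists 2%N; rewrite normrM [`|2^-1|]ger0_norm ?invr_ge0 //.
by have := normr_ge0 x; lra.
Qed.

(* The final segment [S \cup {oo}] of the value group, with [oo = v 0]. *)
Definition inS0 S x := x = 0 \/ S x.

Lemma inS0_up S x y : vfinal S -> inS0 S x -> vle x y -> inS0 S y.
Proof.
move=> [hS0 hSu] [->|hx] hxy; first by left; apply: vle0l.
by case: (eqVneq y 0) => [->|hy]; [left|right; exact: hSu hx hy hxy].
Qed.

Lemma inS0_add S x y : vfinal S -> inS0 S x -> inS0 S y -> inS0 S (x + y).
Proof. by move=> hS hx hy; case: (vle_add x y); [exact: inS0_up hx|exact: inS0_up hy]. Qed.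

Lemma inS0_opp S x : vfinal S -> inS0 S x -> inS0 S (- x).
Proof. by move=> hS hx; apply: inS0_up hx _ => //; apply/vleNr; exact: vle_refl. Qed.

Lemma ball_atE S a b : ball_at S a b <-> inS0 S (a - b).
Proof.
rewrite /ball_at /inS0 /=; split.
- by case=> [->|h]; [left; rewrite subrr|right].
- by case=> [/eqP|h]; [rewrite subr_eq0 eq_sym => /eqP; left|right].
Qed.

Lemma ball_center S a : ball_at S a a.
Proof. by left. Qed.

Lemma ball_convex S a b1 b2 x : vfinal S -> ball_at S a b1 -> ball_at S a b2 ->
  b1 <= x -> x <= b2 -> ball_at S a x.
Proof.
move=> hS; rewrite !ball_atE => h1 h2 hb1 hb2.
have : `|a - x| <= `|a - b1| \/ `|a - x| <= `|a - b2|.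
  case: (normr_cases (a - x)) => -[? ->]; case: (normr_cases (a - b1)) => -[? ->];
  case: (normr_cases (a - b2)) => -[? ->]; (left; lra) || (right; lra).
by case=> h; [apply: inS0_up h1 _|apply: inS0_up h2 _] => //; apply: norm_le_vle.
Qed.

Lemma ball_recenter S a c : vfinal S -> ball_at S a c -> ball_at S a = ball_at S c.
Proof.
move=> hS; rewrite ball_atE => hc; apply: funext => x; apply: propext; rewrite !ball_atE.
split=> h.
- have -> : c - x = - (a - c) + (a - x) by ring.
  by apply: inS0_add => //; apply: inS0_opp.
- have -> : a - x = (a - c) + (c - x) by ring.
  exact: inS0_add.
Qed.

Lemma ball_nested S T a b c : vfinal S -> vfinal T -> ball_at S a c -> ball_at T b c ->
  ball_at S a `<=` ball_at T b \/ ball_at T b `<=` ball_at S a.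
Proof.
move=> hS hT hSc hTc; rewrite (ball_recenter hS hSc) (ball_recenter hT hTc).
case: (pselect (exists2 x, S x & ~ T x)) => [[x0 Sx0 nTx0]|hne].
- right=> z; rewrite !ball_atE => -[->|Tz]; [by left|right].
  case: (vle_total (c - z) x0) => h.
  + by exfalso; apply: nTx0; exact: hT.2 Tz (hS.1 _ Sx0) h.
  + exact: hS.2 Sx0 (hT.1 _ Tz) h.
- left=> z; rewrite !ball_atE => -[->|Sz]; [by left|right].
  by apply: contrapT => nT; apply: hne; exists (c - z).
Qed.

Lemma ball_proper S T a c x : vfinal S -> vfinal T -> ball_at T c `<=` ball_at S a ->
  ball_at S a x -> ~ ball_at T c x ->
  exists p q, [/\ ball_at S a p, ball_at S a q,
    (forall z, ball_at T c z -> p < z) & (forall z, ball_at T c z -> z < q)].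
Proof.
move=> hS hT hsub hx hnx.
have hSc : ball_at S a c by apply: hsub; exact: ball_center.
move: hx; rewrite (ball_recenter hS hSc) ball_atE => hx.
set r := `|c - x|.
have hr : inS0 S r by apply: inS0_up hx _ => //; apply: norm_le_vle; rewrite normr_id.
have hnr : ~ inS0 T r.
  move=> h; apply: hnx; rewrite ball_atE.
  by apply: inS0_up h _ => //; apply: norm_le_vle; rewrite normr_id.
have hr0 : 0 < r by rewrite normr_gt0; apply/eqP => h; apply: hnx; rewrite ball_atE; left.
have ball_lo : ball_at S c (c - r) /\ ~ ball_at T c (c - r).
  by rewrite !ball_atE; have -> : c - (c - r) = r by ring.
have ball_hi : ball_at S c (c + r) /\ ~ ball_at T c (c + r).
  rewrite !ball_atE; have -> : c - (c + r) = - r by ring.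
  by split; [exact: inS0_opp|move/(inS0_opp hT); rewrite opprK].
exists (c - r), (c + r); split; [exact: ball_lo.1|exact: ball_hi.1| |].
- move=> z hz; rewrite ltNge; apply/negP => hzp; apply: ball_lo.2.
  apply: (ball_convex hT hz (ball_center _ _) hzp); lra.
- move=> z hz; rewrite ltNge; apply/negP => hzp; apply: ball_hi.2.
  apply: (ball_convex hT (ball_center _ _) hz _ hzp); lra.
Qed.

Lemma ball_sep S T a b z1 z2 : vfinal S -> vfinal T ->
  (forall c, ball_at S a c -> ball_at T b c -> False) ->
  ball_at S a z1 -> ball_at T b z2 -> z1 < z2 ->
  exists m, (forall z, ball_at S a z -> z < m) /\ (forall z, ball_at T b z -> m < z).
Proof.
move=> hS hT dis h1 h2 h12.
have hab : a < b.
  rewrite ltNge; apply/negP => hba.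
  case: (lerP a z2) => ha2.
    by apply: (dis a (ball_center _ _)); exact: (ball_convex hT (ball_center _ _) h2 hba ha2).
  case: (lerP z1 b) => h1b.
    by apply: (dis b _ (ball_center _ _)); exact: (ball_convex hS h1 (ball_center _ _) h1b hba).
  by apply: (dis z1 h1); exact: (ball_convex hT (ball_center _ _) h2 (ltW h1b) (ltW h12)).
set m := (a + b) / 2.
have hm1 : ~ ball_at S a m.
  rewrite ball_atE => h; apply: (dis b _ (ball_center _ _)); rewrite ball_atE.
  apply: inS0_up h _ => //.
  have -> : a - m = (a - b) / 2 by rewrite /m; field.
  exact: vle_half.
have hm2 : ~ ball_at T b m.
  rewrite ball_atE => h; apply: (dis a (ball_center _ _)); rewrite ball_atE.
  apply: inS0_up h _ => //.
  have -> : b - m = (b - a) / 2 by rewrite /m; field.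
  exact: vle_half.
exists m; split=> z hz; rewrite ltNge; apply/negP => hzm.
- by apply: hm1; apply: (ball_convex hS (ball_center _ _) hz) => //; rewrite /m; lra.
- by apply: hm2; apply: (ball_convex hT hz (ball_center _ _)) => //; rewrite /m; lra.
Qed.

Lemma is_ball_nonempty B : is_ball B -> exists a, B a.
Proof. by move=> [S [a [_ ->]]]; exists a; exact: ball_center. Qed.

Lemma is_ball_convex B u v w : is_ball B -> B u -> B w -> u <= v -> v <= w -> B v.
Proof. by move=> [S [a [hS ->]]]; exact: ball_convex. Qed.

Lemma is_ball_nested B B' c : is_ball B -> is_ball (B' : set K) -> B c -> B' c ->
  B `<=` B' \/ B' `<=` B.
Proof. by move=> [S [a [hS ->]]] [T [b [hT ->]]]; exact: ball_nested. Qed.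

Lemma is_ball_proper B B' x : is_ball B -> is_ball B' -> B' `<=` B -> B x -> ~ B' x ->
  exists p q, [/\ B p, B q, (forall z, B' z -> p < z) & (forall z, B' z -> z < q)].
Proof. by move=> [S [a [hS ->]]] [T [b [hT ->]]]; exact: ball_proper. Qed.

Lemma is_ball_sep B B' z1 z2 : is_ball B -> is_ball B' ->
  (forall c, B c -> B' c -> False) -> B z1 -> B' z2 -> z1 < z2 ->
  exists m, (forall z, B z -> z < m) /\ (forall z, B' z -> m < z).
Proof. by move=> [S [a [hS ->]]] [T [b [hT ->]]]; exact: ball_sep. Qed.

Lemma is_ball_set1 e : is_ball [set e].
Proof.
exists set0, e; split; first by split.
by apply/seteqP; split=> x; rewrite /ball_at /=; [left|move=> [|[]]].
Qed.

Lemma is_ball_setT : is_ball (@setT K).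
Proof.
exists [set x | x != 0], 0; split; first by split=> // x y _ ->.
apply/seteqP; split=> x //= _; rewrite /ball_at /=.
by case: (eqVneq x 0) => [->|h]; [left|right; rewrite sub0r oppr_eq0].
Qed.

Lemma ball_set0 S a b : (forall s, ~ S s) -> ball_at S a b -> b = a.
Proof. by move=> hS [//|h]; case: (hS _ h). Qed.

(** * Edges of a ball *)

Definition gtD B := [set x | forall b, B b -> b < x].

Lemma not_lowD B x : ~ lowD B x -> exists2 b, B b & b <= x.
Proof. by move/existsPNP=> [b hb /negP]; rewrite -leNgt; exists b. Qed.

Lemma not_upD B x : ~ upD B x -> forall b, B b -> b < x.
Proof. by move=> h b hb; rewrite ltNge; apply/negP => hxb; apply: h; exists b. Qed.

Lemma gtD_not_upD B x : gtD B x -> ~ upD B x.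
Proof. by move=> hx [b hb hxb]; have := hx b hb; rewrite ltNge hxb. Qed.

Lemma setC_upD B : ~` upD B = gtD B.
Proof.
apply/seteqP; split=> x /=; first exact: not_upD.
by move/gtD_not_upD.
Qed.

Lemma lowD_sub_upD B b : B b -> lowD B `<=` upD B.
Proof. by move=> hb x hx; exists b => //; exact: ltW (hx b hb). Qed.

Lemma lowD_set1 e : lowD [set e] = [set x | x < e].
Proof. by apply/seteqP; split=> x /=; [apply|move=> h a ->]. Qed.

Lemma upD_setT : upD (@setT K) = setT.
Proof. by apply/seteqP; split=> x // _; exists x. Qed.

Lemma lowD_setT : lowD (@setT K) = set0.
Proof. by apply/seteqP; split=> x //= h; have := h x I; rewrite ltxx. Qed.

Lemma ball_complement_lowD B D E : (exists b, B b) -> ball_complement B D E -> D = lowD B.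
Proof.
move=> [a ha] [hDB hBE hcov]; apply/seteqP; split=> x; first by move=> hx b hb; exact: hDB.
move=> hx; case: (hcov x) => [//|[hb|he]]; first by have := hx x hb; rewrite ltxx.
by have := lt_trans (hx a ha) (hBE a x ha he); rewrite ltxx.
Qed.

Lemma ball_complement_gtD B D E : (exists b, B b) -> ball_complement B D E -> E = gtD B.
Proof.
move=> [a ha] [hDB hBE hcov]; apply/seteqP; split=> x; first by move=> hx b hb; exact: hBE.
move=> hx; case: (hcov x) => [hd|[hb|//]]; last by have := hx x hb; rewrite ltxx.
by have := lt_trans (hx a ha) (hDB x a hd ha); rewrite ltxx.
Qed.

Lemma is_ball_complement B : is_ball B -> ball_complement B (lowD B) (gtD B).
Proof.
move=> hB; split; [by move=> d b hd; exact: hd|by move=> b e hb he; exact: he|].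
move=> x; case: (pselect (lowD B x)) => hl; first by left.
case: (pselect (gtD B x)) => hg; first by right; right.
right; left; have [b1 hb1 hb1x] := not_lowD hl.
have /existsPNP [b2 hb2 /negP] := hg; rewrite -leNgt => hxb2.
exact: (is_ball_convex hB hb1 hb2).
Qed.

Section BallEdges.
Variables (S : set K) (a : K).
Hypothesis hS : vfinal S.
Let B0 := ball_at S a.

Lemma ball_neq_setT : B0 <> setT -> exists2 c, c != 0 & ~ S c.
Proof.
move=> hne; apply: contrapT => hn; apply: hne; apply/seteqP; split=> // b _.
rewrite /B0 ball_atE; case: (eqVneq (a - b) 0) => h; [by left|right].
by apply: contrapT => hS'; apply: hn; exists (a - b).
Qed.

Lemma ball_far t b : t != 0 -> ~ S t -> B0 b -> `|t| <= `|a - b| -> False.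
Proof.
move=> ht hSt; rewrite /B0 ball_atE => -[->|h] hle.
- by move: hle; rewrite normr0 normr_le0 (negbTE ht).
- by apply: hSt; apply: hS.2 h ht _; exact: norm_le_vle.
Qed.

Lemma lowD_ball_sub t : 0 < t -> ~ S t -> lowD B0 (a - t).
Proof.
move=> ht hSt b hb; rewrite ltNge; apply/negP => hba.
apply: (ball_far (lt0r_neq0 ht) hSt hb); rewrite !ger0_norm; lra.
Qed.

Lemma gtD_ball_add t : 0 < t -> ~ S t -> gtD B0 (a + t).
Proof.
move=> ht hSt b hb; rewrite ltNge; apply/negP => hba.
apply: (ball_far (lt0r_neq0 ht) hSt hb); rewrite gtr0_norm // ler0_norm; lra.
Qed.

Lemma lowD_ball_nonempty : B0 <> setT -> exists x, lowD B0 x.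
Proof.
move=> /ball_neq_setT [c hc hSc]; exists (a - `|c|); apply: lowD_ball_sub.
- by rewrite normr_gt0.
- move=> h; apply: hSc; apply: hS.2 h hc _; apply: norm_le_vle; by rewrite normr_id.
Qed.

Lemma gtD_ball_nonempty : B0 <> setT -> exists x, gtD B0 x.
Proof.
move=> /ball_neq_setT [c hc hSc]; exists (a + `|c|); apply: gtD_ball_add.
- by rewrite normr_gt0.
- move=> h; apply: hSc; apply: hS.2 h hc _; apply: norm_le_vle; by rewrite normr_id.
Qed.

Lemma ball_mid_out x : ~ B0 x -> ~ B0 ((x + a) / 2).
Proof.
move=> hx; rewrite /B0 !ball_atE => h; apply: hx; rewrite /B0 ball_atE.
apply: inS0_up h _ => //.
have -> : a - (x + a) / 2 = (a - x) / 2 by field.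
exact: vle_half.
Qed.

Lemma lowD_ball_nomax x : lowD B0 x -> exists2 x', lowD B0 x' & x < x'.
Proof.
move=> hx; have hxa : x < a := hx a (ball_center _ _).
have hnx : ~ B0 x by move=> h; have := hx x h; rewrite ltxx.
exists ((x + a) / 2); last lra.
move=> b hb; rewrite ltNge; apply/negP => hb2; apply: (ball_mid_out hnx).
apply: (ball_convex hS hb (ball_center _ _) hb2); lra.
Qed.

Lemma gtD_ball_nomin x : gtD B0 x -> exists2 x', gtD B0 x' & x' < x.
Proof.
move=> hx; have hxa : a < x := hx a (ball_center _ _).
have hnx : ~ B0 x by move=> h; have := hx x h; rewrite ltxx.
exists ((x + a) / 2); last lra.
move=> b hb; rewrite ltNge; apply/negP => hb2; apply: (ball_mid_out hnx).
apply: (ball_convex hS (ball_center _ _) hb _ hb2); lra.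
Qed.

End BallEdges.

End Balls.

(** * The ordered set of cuts *)

Section Cuts.
Variable K : realFieldType.
Implicit Types (x y z e : K) (A B : set K) (X Y Z C : cut K).

Lemma cut_ext X Y : cutD X = cutD Y -> X = Y.
Proof.
case: X Y => [DX PX] [DY PY] /= h; subst DY.
by rewrite (Prop_irrelevance PX PY).
Qed.

Lemma cut_total X Y : cutD X `<=` cutD Y \/ cutD Y `<=` cutD X.
Proof.
case: (pselect (cutD X `<=` cutD Y)) => [h|/existsPNP [x hx hnx]]; [by left|right].
move=> y hy; case: (lerP y x) => hyx; first exact: cutP hx hyx.
by case: hnx; apply: cutP hy _; exact: ltW.
Qed.

Lemma cut_ltI X Y y : cutD X `<=` cutD Y -> cutD Y y -> ~ cutD X y -> cut_lt X Y.
Proof. by move=> h hy hny; split=> // he; apply: hny; rewrite he. Qed.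

Lemma cut_lt_mem X Y y : cutD Y y -> ~ cutD X y -> cut_lt X Y.
Proof.
move=> hy hny; case: (cut_total X Y) => h; first exact: cut_ltI h hy hny.
by case: hny; exact: h.
Qed.

Lemma cut_ltE X Y : cut_lt X Y -> exists2 y, cutD Y y & ~ cutD X y.
Proof. by move=> [h hne]; apply/existsPNP => h2; apply: hne; apply/seteqP. Qed.

Lemma cut_lt_sub X Y : cut_lt X Y -> cutD X `<=` cutD Y.
Proof. by case. Qed.

Lemma cut_lt_le_trans X Y Z : cut_lt X Y -> cutD Y `<=` cutD Z -> cut_lt X Z.
Proof.
move=> hXY hYZ; have [y hy hny] := cut_ltE hXY.
by apply: (cut_ltI (y := y)) => //; [exact: subset_trans (cut_lt_sub hXY) hYZ|exact: hYZ].
Qed.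

Lemma cut_le_lt_trans X Y Z : cutD X `<=` cutD Y -> cut_lt Y Z -> cut_lt X Z.
Proof.
move=> hXY hYZ; have [y hy hny] := cut_ltE hYZ.
apply: (cut_ltI (y := y)) => //; first exact: subset_trans hXY (cut_lt_sub hYZ).
by move/hXY.
Qed.

Lemma cut_ltxx X : ~ cut_lt X X.
Proof. by case. Qed.

Lemma cut_le_eqVlt X Y : cutD X `<=` cutD Y -> X = Y \/ cut_lt X Y.
Proof.
by move=> h; case: (pselect (cutD X = cutD Y)) => [/cut_ext|ne]; [left|right].
Qed.

Lemma cut_trichotomy X Y : cut_lt X Y \/ X = Y \/ cut_lt Y X.
Proof. by case: (cut_total X Y) => /cut_le_eqVlt [->|]; auto. Qed.

Definition ltcut e := @Cut K [set x | x < e] (fun x y hx hyx => le_lt_trans hyx hx).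
Definition lecut e := @Cut K [set x | x <= e] (fun x y hx hyx => le_trans hyx hx).

Definition lower_edge B :=
  @Cut K (lowD B) (fun x y hx hyx b hb => le_lt_trans hyx (hx b hb)).
Definition upper_edge B := @Cut K (upD B)
  (fun x y '(ex_intro2 b hb hxb) hyx => ex_intro2 _ _ b hb (le_trans hyx hxb)).

Definition cut_bot := @Cut K set0 (fun _ _ h _ => h).
Definition cut_top := @Cut K setT (fun _ _ h _ => h).

Lemma cutD_lt C x y : cutD C y -> ~ cutD C x -> y < x.
Proof. by move=> hy hx; rewrite ltNge; apply/negP => h; apply: hx; exact: cutP hy h. Qed.

Lemma cut_lt_lecut C x : ~ cutD C x -> cut_lt C (lecut x).
Proof.
move=> hx; apply: (cut_ltI (y := x)) => //=.
by move=> y hy; exact: ltW (cutD_lt hy hx).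
Qed.

Lemma lecut_lt_cut C x x' : cutD C x' -> x < x' -> cut_lt (lecut x) C.
Proof.
move=> hx' hxx'; apply: (cut_ltI (y := x')) => //=; last by rewrite leNgt hxx'.
by move=> y hy; apply: cutP hx' _; exact: le_trans hy (ltW hxx').
Qed.

Lemma cut_lt_trans X Y Z : cut_lt X Y -> cut_lt Y Z -> cut_lt X Z.
Proof. by move=> hXY /cut_lt_sub; exact: cut_lt_le_trans. Qed.

Lemma cut_lt_leF X Y : cut_lt X Y -> cutD Y `<=` cutD X -> False.
Proof. by move=> hXY hYX; exact: cut_ltxx (cut_lt_le_trans hXY hYX). Qed.

Lemma basic_open_lecut_below W C : basic_open W -> W C -> (exists x, cutD C x) ->
  (forall x, cutD C x -> exists2 x', cutD C x' & x < x') ->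
  exists2 x, cutD C x & W (lecut x).
Proof.
move=> hW hWC [x0 hx0] hnomax.
have below x : cutD C x -> cut_lt (lecut x) C.
  by move=> hx; have [x' hx' hxx'] := hnomax x hx; exact: lecut_lt_cut hx' hxx'.
case: hW hWC => [[C1 [C2 ->]]|[[C1 ->]|[C2 ->]]] /=.
- move=> [h1 h2]; have [x hx hnx] := cut_ltE h1; exists x => //.
  by split; [exact: cut_lt_lecut|exact: cut_lt_le_trans (below x hx) (cut_lt_sub h2)].
- by move=> h1; have [x hx hnx] := cut_ltE h1; exists x => //; exact: cut_lt_lecut.
- by move=> h2; exists x0 => //; exact: cut_lt_le_trans (below x0 hx0) (cut_lt_sub h2).
Qed.

Lemma basic_open_lecut_above W C : basic_open W -> W C -> (exists e, ~ cutD C e) ->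
  (forall e, ~ cutD C e -> exists2 e', ~ cutD C e' & e' < e) ->
  exists2 e, ~ cutD C e & W (lecut e).
Proof.
move=> hW hWC [e0 he0] hnomin.
have above X : cut_lt C X -> exists2 e, ~ cutD C e & cut_lt (lecut e) X.
  move=> hX; have [e he hne] := cut_ltE hX; have [e' he' he'e] := hnomin e hne.
  by exists e' => //; exact: lecut_lt_cut he he'e.
case: hW hWC => [[C1 [C2 ->]]|[[C1 ->]|[C2 ->]]] /=.
- move=> [h1 h2]; have [e he hlt] := above _ h2; exists e => //.
  by split=> //; exact: cut_lt_trans h1 (cut_lt_lecut he).
- by move=> h1; exists e0 => //; exact: cut_lt_trans h1 (cut_lt_lecut he0).
- by move=> /above.
Qed.

Lemma interval_open_singleton V C : interval_open V -> V C ->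
  (forall C', V C' -> C' = C) -> ball_cut C.
Proof.
move=> hV hC hsing; have [W [hW hWC hWV]] := hV C hC.
case: hW hWC hWV => [[C1 [C2 ->]]|[[C1 ->]|[C2 ->]]] /= hWC hWV.
- case: hWC => h1 h2; have [e he hne] := cut_ltE h2.
  have <- : ltcut e = C.
    apply: hsing; apply: hWV; split.
    + by apply: cut_lt_le_trans h1 _ => x hx; exact: cutD_lt hx hne.
    + apply: (cut_ltI (y := e)) => //=; last by rewrite ltxx.
      by move=> x hx; apply: cutP he _; exact: ltW.
  by exists [set e]; split; [exact: is_ball_set1|right; rewrite lowD_set1].
- have <- : cut_top = C by apply: hsing; apply: hWV; exact: cut_lt_le_trans hWC _.
  by exists setT; split; [exact: is_ball_setT|left; rewrite upD_setT].
- have <- : cut_bot = C by apply: hsing; apply: hWV; apply: cut_le_lt_trans hWC.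
  by exists setT; split; [exact: is_ball_setT|right; rewrite lowD_setT].
Qed.

Definition left_nbhd (U : set (cut K)) X := (forall Y, cutD Y `<=` cutD X -> U Y) \/
  exists2 X1, cut_lt X1 X & forall Y, cut_lt X1 Y -> cutD Y `<=` cutD X -> U Y.
Definition right_nbhd (U : set (cut K)) X := (forall Y, cutD X `<=` cutD Y -> U Y) \/
  exists2 X2, cut_lt X X2 & forall Y, cut_lt Y X2 -> cutD X `<=` cutD Y -> U Y.

Lemma interval_open_nbhd (U : set (cut K)) X : interval_open U -> U X ->
  left_nbhd U X /\ right_nbhd U X.
Proof.
move=> hU hX; have [W [hW hWC hWV]] := hU X hX.
case: hW hWC hWV => [[C1 [C2 ->]]|[[C1 ->]|[C2 ->]]] /= hWC hWV.
- case: hWC => h1 h2; split; right.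
  + exists C1 => // Y hY hYX; apply: hWV; split=> //; exact: cut_le_lt_trans hYX h2.
  + exists C2 => // Y hY hXY; apply: hWV; split=> //; exact: cut_lt_le_trans h1 hXY.
- split; [right; exists C1 => // Y hY _; exact: hWV|left].
  by move=> Y hXY; apply: hWV; exact: cut_lt_le_trans hWC hXY.
- split; [left|right; exists C2 => // Y hY _; exact: hWV].
  by move=> Y hYX; apply: hWV; exact: cut_le_lt_trans hYX hWC.
Qed.

Lemma nbhd_interval_open (V : set (cut K)) C : V C -> left_nbhd V C -> right_nbhd V C ->
  exists W, [/\ basic_open W, W C & W `<=` V].
Proof.
move=> hC hL hR.
case: hL hR => [hL|[X1 h1 hL]] [hR|[X2 h2 hR]].
- have hall Y : V Y by case: (cut_total Y C); [exact: hL|exact: hR].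
  case: (pselect (cutD C = setT)) => hT.
  + exists [set Y | cut_lt cut_bot Y]; split; [by right; left; exists cut_bot| |by []].
    by apply: (cut_ltI (y := 0)) => //; rewrite hT.
  + exists [set Y | cut_lt Y cut_top]; split; [by right; right; exists cut_top|by split|by []].
- exists [set Y | cut_lt Y X2]; split=> //; first by right; right; exists X2.
  by move=> Y /= hY; case: (cut_total Y C) => h; [exact: hL|exact: hR].
- exists [set Y | cut_lt X1 Y]; split=> //; first by right; left; exists X1.
  by move=> Y /= hY; case: (cut_total Y C) => h; [exact: hL|exact: hR].
- exists [set Y | cut_lt X1 Y /\ cut_lt Y X2]; split=> //; first by left; exists X1, X2.
  by move=> Y /= [hY1 hY2]; case: (cut_total Y C) => h; [exact: hL|exact: hR].
Qed.

Definition inside B := [set Y | cut_lt (lower_edge B) Y /\ cut_lt Y (upper_edge B)].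
Definition outside B := [set Y | cut_lt Y (lower_edge B) \/ cut_lt (upper_edge B) Y].

Lemma cut_equiv_sym X Y : cut_equiv X Y -> cut_equiv Y X.
Proof.
case=> [->|[B [hB h]]]; [by left|right; exists B; split=> //].
by case: h => -[h1 h2]; [right|left].
Qed.

Lemma full_edges (U : set (cut K)) :
  (forall B, is_ball B -> U (lower_edge B) -> U (upper_edge B)) ->
  (forall B, is_ball B -> U (upper_edge B) -> U (lower_edge B)) -> full U.
Proof.
move=> hlu hul Y Y' hY [<-//|[B [hB [[e1 e2]|[e1 e2]]]]].
- rewrite (cut_ext (Y := upper_edge B) e2); apply: hlu hB _.
  by rewrite -(cut_ext (Y := lower_edge B) e1).
- rewrite (cut_ext (Y := lower_edge B) e2); apply: hul hB _.
  by rewrite -(cut_ext (Y := upper_edge B) e1).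
Qed.

Lemma basic_open_inside B : basic_open (inside B).
Proof. by left; exists (lower_edge B), (upper_edge B). Qed.

Lemma interval_open_outside B : interval_open (outside B).
Proof.
move=> Y [hY|hY].
- exists [set Z | cut_lt Z (lower_edge B)]; split=> //; last by move=> Z; left.
  by right; right; exists (lower_edge B).
- exists [set Z | cut_lt (upper_edge B) Z]; split=> //; last by move=> Z; right.
  by right; left; exists (upper_edge B).
Qed.

Lemma sub_ball_edges B B' : is_ball B -> is_ball B' -> B' `<=` B -> ~ B `<=` B' ->
  cut_lt (lower_edge B) (lower_edge B') /\ cut_lt (upper_edge B') (upper_edge B).
Proof.
move=> hB hB' hsub /existsPNP [x hx hnx].
have [p [q [hp hq hpB' hqB']]] := is_ball_proper hB hB' hsub hx hnx.
split.
- apply: (cut_ltI (y := p)) => /=; last by move/(_ p hp); rewrite ltxx.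
  + by move=> y hy b hb; apply: hy; exact: hsub.
  + by move=> b hb; exact: hpB'.
- apply: (cut_ltI (y := q)) => /=; last by move=> [b /hqB']; rewrite ltNge => /negP.
  + by move=> y [b hb hyb]; exists b => //; exact: hsub.
  + by exists q.
Qed.

Lemma inside_sub_ball_edges B B' : is_ball B -> is_ball B' -> B' `<=` B -> ~ B `<=` B' ->
  inside B (lower_edge B') /\ inside B (upper_edge B').
Proof.
move=> hB hB' hsub hne; have [b hb] := is_ball_nonempty hB'.
have [hlo hup] := sub_ball_edges hB hB' hsub hne.
have hlu : cutD (lower_edge B') `<=` cutD (upper_edge B') := lowD_sub_upD hb.
split; split=> //.
- exact: cut_le_lt_trans hlu hup.
- exact: cut_lt_le_trans hlo hlu.
Qed.

Lemma inside_ball_edges B B' : is_ball B -> is_ball B' ->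
  inside B (lower_edge B') \/ inside B (upper_edge B') -> B' `<=` B /\ ~ B `<=` B'.
Proof.
move=> hB hB' hin.
have [[b2 hb2 hBb2] [x hx hnx]] : (exists2 b2, B' b2 & B b2) /\ exists2 x, B x & ~ B' x.
  case: hin => -[h1 h2].
  - have [y hy /not_lowD [b' hb' hb'y]] := cut_ltE h1.
    have [y2 [b hb hy2b] /not_lowD [b2 hb2 hb2y2]] := cut_ltE h2.
    have hb'b2 := le_lt_trans hb'y (hy b2 hb2).
    split; [exists b2 => //|exists b' => // /hy]; last by rewrite ltNge hb'y.
    exact: is_ball_convex hB hb' hb (ltW hb'b2) (le_trans hb2y2 hy2b).
  - have [y [b2 hb2 hyb2] /not_lowD [b' hb' hb'y]] := cut_ltE h1.
    have [y2 [b hb hy2b] /not_upD hB'y2] := cut_ltE h2.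
    have hb2b := lt_le_trans (hB'y2 b2 hb2) hy2b.
    split; [exists b2 => //|exists b => // /hB'y2]; last by rewrite ltNge hy2b.
    exact: is_ball_convex hB hb' hb (le_trans hb'y hyb2) (ltW hb2b).
case: (is_ball_nested hB hB' hBb2 hb2) => hsub; last by split=> // /(_ _ hx).
by case: hnx; exact: hsub.
Qed.

Lemma inside_full_open B : is_ball B -> full_open (inside B).
Proof.
move=> hB; split; last by move=> Y hY; exists (inside B); split=> //; exact: basic_open_inside.
apply: full_edges => B' hB' hin.
- have [hsub hne] := inside_ball_edges hB hB' (or_introl hin).
  exact: (inside_sub_ball_edges hB hB' hsub hne).2.
- have [hsub hne] := inside_ball_edges hB hB' (or_intror hin).
  exact: (inside_sub_ball_edges hB hB' hsub hne).1.
Qed.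

Lemma sub_ball_not_outside B B' b : B' `<=` B -> B' b ->
  ~ outside B (lower_edge B') /\ ~ outside B (upper_edge B').
Proof.
move=> hsub hb.
have hlo : lowD B `<=` lowD B' by move=> x hx z /hsub; exact: hx.
have hup : upD B' `<=` upD B by move=> x [z hz hxz]; exists z => //; exact: hsub.
have hlu : lowD B' `<=` upD B' := lowD_sub_upD hb.
split=> -[h|h]; apply: (cut_lt_leF h) => //=.
- exact: subset_trans hlu hup.
- exact: subset_trans hlo hlu.
Qed.

Lemma separated_edges B B' m : (forall z, B' z -> z < m) -> (forall z, B z -> m < z) ->
  cut_lt (upper_edge B') (lower_edge B).
Proof.
move=> hB'm hmB; apply: (cut_ltI (y := m)) => /=.
- by move=> y [z hz hyz] u hu; exact: le_lt_trans hyz (lt_trans (hB'm z hz) (hmB u hu)).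
- by move=> u hu; exact: hmB.
- by move=> [z /hB'm]; rewrite ltNge => /negP.
Qed.

Lemma disjoint_ball_edges B B' : is_ball B -> is_ball B' ->
  (forall c, B c -> B' c -> False) ->
  cut_lt (upper_edge B') (lower_edge B) \/ cut_lt (upper_edge B) (lower_edge B').
Proof.
move=> hB hB' dis; have [b hb] := is_ball_nonempty hB; have [b' hb'] := is_ball_nonempty hB'.
case: (ltgtP b' b) => [hlt|hlt|heq]; last by case: (dis b) => //; rewrite -heq.
- left; have dis' c : B' c -> B c -> False by move=> *; exact: (dis c).
  by have [m [h1 h2]] := is_ball_sep hB' hB dis' hb' hb hlt; exact: separated_edges h1 h2.
- by right; have [m [h1 h2]] := is_ball_sep hB hB' dis hb hb' hlt; exact: separated_edges h1 h2.
Qed.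

Lemma outside_ball_edges B B' : is_ball B -> is_ball B' ->
  outside B (lower_edge B') \/ outside B (upper_edge B') ->
  outside B (lower_edge B') /\ outside B (upper_edge B').
Proof.
move=> hB hB' hout; have [b' hb'] := is_ball_nonempty hB'.
have hlu : cutD (lower_edge B') `<=` cutD (upper_edge B') := lowD_sub_upD hb'.
case: (pselect (exists2 c, B c & B' c)) => [[c hc hc']|hdis].
- case: (pselect (B' `<=` B)) => hsub'.
    by have [n1 n2] := sub_ball_not_outside hsub' hb'; case: hout.
  case: (is_ball_nested hB hB' hc hc') => hsub //.
  by have [hlo hup] := sub_ball_edges hB' hB hsub hsub'; split; [left|right].
- have dis c : B c -> B' c -> False by move=> *; apply: hdis; exists c.
  case: (disjoint_ball_edges hB hB' dis) => h; split.
  + by left; exact: cut_le_lt_trans hlu h.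
  + by left.
  + by right.
  + by right; exact: cut_lt_le_trans h hlu.
Qed.

Lemma outside_full_open B : is_ball B -> full_open (outside B).
Proof.
move=> hB; split; last exact: interval_open_outside.
apply: full_edges => B' hB' hout.
- exact: (outside_ball_edges hB hB' (or_introl hout)).2.
- exact: (outside_ball_edges hB hB' (or_intror hout)).1.
Qed.

Lemma cut_cases C : ~ ball_cut C \/ cutD C = set0 \/ cutD C = setT \/
  (exists S a, [/\ vfinal S, ball_at S a <> setT & cutD C = lowD (ball_at S a)]) \/
  (exists S a, [/\ vfinal S, ball_at S a <> setT & cutD C = upD (ball_at S a)]).
Proof.
case: (pselect (ball_cut C)) => [[B [[S [a [hS ->]]] hC]]|]; last by left.
case: (pselect (ball_at S a = setT)) => [hT|hT].
- by case: hC; rewrite hT ?upD_setT ?lowD_setT; auto.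
- by case: hC => h; do 3 right; [right|left]; exists S, a.
Qed.

End Cuts.

(** * Cuts of [R] inside an ordered extension [F] *)

Section Embedding.
Variables (R F : realFieldType) (i : {rmorphism R -> F}).
Hypothesis i_mono : {mono i : x y / x <= y}.
Implicit Types (r s d e : R) (A : set R) (C : cut R) (x y z : F).

Lemma i_lt : {mono i : x y / x < y}.
Proof. by move=> x y; rewrite !lt_def !i_mono eq_le !i_mono -eq_le. Qed.

Lemma i_eq0 r : i r = 0 <-> r = 0.
Proof.
split=> [h|->]; last exact: rmorph0.
by apply/eqP; rewrite eq_le -!i_mono h rmorph0 lexx.
Qed.

Lemma i_norm r : i `|r| = `|i r|.
Proof.
case: (normr_cases r) => -[h ->].
- by rewrite ger0_norm // -(rmorph0 i) i_mono.
- by rewrite rmorphN ltr0_norm // -(rmorph0 i) i_lt.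
Qed.

Lemma i_vle r s : vle r s -> vle (i r) (i s).
Proof. by move=> [n h]; exists n; rewrite -!i_norm -(rmorph_nat i) -rmorphM i_mono. Qed.

Definition ext_upcut A := @Cut F (ext_upD i A)
  (fun x y '(ex_intro2 a ha hxa) hyx => ex_intro2 _ _ a ha (le_trans hyx hxa)).
Definition ext_lowcut A :=
  @Cut F (ext_lowD i A) (fun x y hx hyx a ha => le_lt_trans hyx (hx a ha)).

Lemma ext_upD_sub_ext_lowD C : ext_upD i (cutD C) `<=` ext_lowD i (~` cutD C).
Proof.
by move=> y [d hd hyd] e he; apply: le_lt_trans hyd _; rewrite i_lt; exact: cutD_lt hd he.
Qed.

Lemma restrict_ext_upD C : [set r | ext_upD i (cutD C) (i r)] = cutD C.
Proof.
apply/seteqP; split=> r /=; last by move=> hr; exists r.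
by move=> [d hd]; rewrite i_mono; exact: cutP hd.
Qed.

Lemma restrict_ext_lowD C : [set r | ext_lowD i (~` cutD C) (i r)] = cutD C.
Proof.
apply/seteqP; split=> r /=; last by move=> hr e he; rewrite i_lt; exact: cutD_lt hr he.
by move=> h; apply: contrapT => hr; have := h r hr; rewrite ltxx.
Qed.

Section Restriction.
Variable iota : cut R -> cut F.
Hypothesis iota_restrict : forall C, restrict i (iota C) = cutD C.

Lemma iota_mem C r : cutD (iota C) (i r) <-> cutD C r.
Proof. by rewrite -(iota_restrict C). Qed.

Lemma ext_upD_sub_iota C : ext_upD i (cutD C) `<=` cutD (iota C).
Proof. by move=> y [d hd hyd]; apply: cutP hyd; apply/iota_mem. Qed.

Lemma iota_sub_ext_lowD C : cutD (iota C) `<=` ext_lowD i (~` cutD C).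
Proof. by move=> y hy e /iota_mem he; exact: cutD_lt hy he. Qed.

Lemma iota_sub_ext_upD C' C : cut_lt C' C -> cutD (iota C') `<=` ext_upD i (cutD C).
Proof.
move=> /cut_ltE [d hd /iota_mem hnd] y hy; exists d => //.
exact: ltW (cutD_lt hy hnd).
Qed.

Lemma ext_lowD_sub_iota C C' : cut_lt C C' -> ext_lowD i (~` cutD C) `<=` cutD (iota C').
Proof.
move=> /cut_ltE [e he hne] y hy.
by apply: cutP (ltW (hy e hne)); apply/iota_mem.
Qed.

Lemma iota_mono C' C : cutD C' `<=` cutD C -> cutD (iota C') `<=` cutD (iota C).
Proof.
move=> h; case: (cut_total (iota C') (iota C)) => // h2.
have -> // : C' = C.
by apply: cut_ext; apply/seteqP; split=> // r /iota_mem/h2/iota_mem.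
Qed.

Lemma left_nbhd_preimage (U : set (cut F)) C L :
  U (iota C) -> left_nbhd U L ->
  (forall y, cutD L y -> exists2 d, cutD C d & y <= i d) ->
  (forall C', cut_lt C' C -> cutD (iota C') `<=` cutD L) ->
  left_nbhd (iota @^-1` U) C.
Proof.
move=> hUC [hL|[X1 hX1 hL]] hLC hbelow.
- left=> C' /cut_le_eqVlt [->//|hlt]; exact/hL/hbelow.
- have [y hy hny] := cut_ltE hX1; have [d hd hyd] := hLC y hy.
  right; exists (ltcut d).
  + apply: (cut_ltI (y := d)) => //=; last by rewrite ltxx.
    by move=> x hx; apply: cutP hd _; exact: ltW.
  + move=> C' hC1 /cut_le_eqVlt [->//|hlt]; apply: hL; last exact: hbelow.
    have [x hx /= hnx] := cut_ltE hC1.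
    have hyC' : cutD (iota C') y.
      by apply: (cutP _ hyd); apply/iota_mem; apply: (cutP hx); rewrite leNgt; apply/negP.
    case: (cut_total X1 (iota C')) => hs; first exact: cut_ltI hs hyC' hny.
    by case: hny; exact: hs.
Qed.

Lemma right_nbhd_preimage (U : set (cut F)) C L :
  U (iota C) -> right_nbhd U L ->
  (forall y, ~ cutD L y -> exists2 e, ~ cutD C e & i e <= y) ->
  (forall C', cut_lt C C' -> cutD L `<=` cutD (iota C')) ->
  right_nbhd (iota @^-1` U) C.
Proof.
move=> hUC [hL|[X2 hX2 hL]] hLC habove.
- left=> C' /cut_le_eqVlt [<-//|hlt]; exact/hL/habove.
- have [y hy hny] := cut_ltE hX2; have [e he hey] := hLC y hny.
  right; exists (lecut e); first exact: cut_lt_lecut.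
  move=> C' hC2 /cut_le_eqVlt [<-//|hlt]; apply: hL; last exact: habove.
  have hnyC' : ~ cutD (iota C') y.
    move=> h; have /iota_mem heC' := cutP h hey.
    case: hC2 => hsub; apply; apply/seteqP.
    by split=> [|x]; [exact: hsub|exact: cutP heC'].
  case: (cut_total (iota C') X2) => hs; first exact: cut_ltI hs hy hnyC'.
  by case: hnyC'; exact: hs.
Qed.

End Restriction.

Lemma is_ball_preimage (B : set F) d : is_ball B -> B (i d) -> is_ball [set r | B (i r)].
Proof.
move=> [T [c [hT ->]]] hd; rewrite (ball_recenter hT hd).
exists [set s | T (i s)], d; split.
- split=> [s /hT.1|x y hx hy hxy]; first by apply: contra_neq => ->; rewrite rmorph0.
  by apply: hT.2 hx _ (i_vle hxy); apply: contra_neq hy => /i_eq0.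
- apply/seteqP; split=> r /=; rewrite !ball_atE /inS0 -rmorphB => -[/i_eq0|]; by [left|right].
Qed.

Section Gap.
Variable C : cut R.
Hypothesis C_nonball : ~ ball_cut C.
Let D := cutD C.

Definition gap := [set y | (forall d, D d -> i d < y) /\ (forall e, ~ D e -> y < i e)].

(* A ball of [F] through the gap meets [i R] on both sides of [C]: otherwise its
   trace on [R] would be a ball with edge [C]. *)
Lemma gap_ball_upper (B : set F) g d : is_ball B -> gap g -> B g -> D d -> B (i d) ->
  exists2 e, ~ D e & B (i e).
Proof.
move=> hB [hg1 hg2] hBg hd hBd; apply: contrapT => /forallPNP hno.
apply: C_nonball; exists [set r | B (i r)]; split; first exact: is_ball_preimage hBd.
left; apply/seteqP; split=> x /=.
- move=> hx; case: (lerP x d) => hxd; first by exists d.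
  exists x => //; apply: (is_ball_convex hB hBd hBg); first by rewrite i_mono ltW.
  exact: ltW (hg1 x hx).
- by move=> [r hr hxr]; apply: cutP _ hxr; apply: contrapT => /hno.
Qed.

Lemma gap_ball_lower (B : set F) g e : is_ball B -> gap g -> B g -> ~ D e -> B (i e) ->
  exists2 d, D d & B (i d).
Proof.
move=> hB [hg1 hg2] hBg he hBe; apply: contrapT => /forallPNP hno.
apply: C_nonball; exists [set r | B (i r)]; split; first exact: is_ball_preimage hBe.
right; apply/seteqP; split=> x /=.
- by move=> hx r hr; apply: cutD_lt hx _ => /hno.
- move=> hx; apply: contrapT => hnx.
  have hBx : B (i x).
    apply: (is_ball_convex hB hBg hBe); first exact: ltW (hg2 x hnx).
    by rewrite i_mono; exact: ltW (hx e hBe).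
  by have := hx x hBx; rewrite ltxx.
Qed.

Lemma gap_lowD g : gap g -> lowD gap = ext_upD i D.
Proof.
move=> hg; apply/seteqP; split=> y /=; last first.
  by move=> [d hd hyd] z [hz _]; exact: le_lt_trans hyd (hz d hd).
move=> hy; apply: contrapT => hn.
have hG : gap y.
  split; last by move=> e he; exact: lt_trans (hy g hg) (hg.2 e he).
  by move=> d hd; rewrite ltNge; apply/negP => h; apply: hn; exists d.
by have := hy y hG; rewrite ltxx.
Qed.

Lemma gap_upD g : gap g -> upD gap = ext_lowD i (~` D).
Proof.
move=> hg; apply/seteqP; split=> y /=.
- by move=> [z [_ hz] hyz] e he; exact: le_lt_trans hyz (hz e he).
- move=> hy; case: (lerP y g) => hyg; first by exists g.
  by exists y => //; split=> // d hd; exact: lt_trans (hg.1 d hd) hyg.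
Qed.

Lemma gap_empty : ~ (exists g, gap g) -> ext_upD i D = ext_lowD i (~` D).
Proof.
move=> hne; apply/seteqP; split; first exact: ext_upD_sub_ext_lowD.
move=> y hy; apply: contrapT => hn; apply: hne; exists y; split=> // d hd.
by rewrite ltNge; apply/negP => h; apply: hn; exists d.
Qed.

(* Subdividing [d, e] into [n.+1] steps, some step crosses the cut and so
   contains the whole gap. *)
Lemma gap_width_lt g1 g2 d e (n : nat) : gap g1 -> gap g2 -> D d -> ~ D e ->
  `|g2 - g1| < (i e - i d) / n.+1%:R.
Proof.
move=> hg1 hg2 hd he.
pose st := (e - d) / n.+1%:R.
have hst : i st = (i e - i d) / n.+1%:R.
  by rewrite /st rmorphM rmorphV ?unitfE ?pnatr_eq0 // rmorphB rmorph_nat.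
have hP0 : D (d + 0%:R * st) by rewrite mul0r addr0.
have hPn : ~ D (d + n.+1%:R * st) by rewrite /st mulrC divfK ?pnatr_eq0 // addrC subrK.
have [k [hk hk1]] := nat_transition (P := fun k => D (d + k%:R * st)) hP0 hPn.
have hstep : i (d + k.+1%:R * st) - i (d + k%:R * st) = i st.
  by rewrite -rmorphB; congr (i _); rewrite -addn1 natrD; ring.
have := hg1.1 _ hk; have := hg2.1 _ hk; have := hg1.2 _ hk1; have := hg2.2 _ hk1.
by rewrite -hst ltr_norml; lra.
Qed.

(* The ball around [y0] of radius [v (g2 - g1)], if it met [i R], would contain
   points [i d], [i e] on both sides of [C] at distances [O(g2 - g1)]. *)
Lemma gap_vle g1 g2 y0 r : gap g1 -> gap g2 -> gap y0 -> g1 != g2 ->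
  ~ vle (g2 - g1) (y0 - i r).
Proof.
move=> hg1 hg2 hy0 hne hvle; set w := `|g2 - g1|.
have hw : 0 < w by rewrite normr_gt0 subr_eq0 eq_sym.
pose T := [set u : F | u != 0 /\ vle w u].
have hT : vfinal T.
  by split=> [x []|x y [_ hx] hy hxy]; last by split=> //; exact: vle_trans hx hxy.
have hB : is_ball (ball_at T y0) by exists T, y0.
have hBr : ball_at T y0 (i r).
  rewrite ball_atE; case: (eqVneq (y0 - i r) 0) => h; [by left|right; split=> //].
  by apply: vle_trans hvle; apply: norm_le_vle; rewrite normr_id.
have bound x : ball_at T y0 x -> exists m : nat, `|y0 - x| <= m%:R * w.
  rewrite ball_atE => -[->|[_ [m hm]]]; first by exists 0%N; rewrite normr0 mul0r.
  by exists m; rewrite -[w]normr_id.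
have [d [e [hd he hBd hBe]]] : exists d e, [/\ D d, ~ D e, ball_at T y0 (i d) &
    ball_at T y0 (i e)].
  case: (pselect (D r)) => hr.
  - by have [e he hBe] := gap_ball_upper hB hy0 (ball_center _ _) hr hBr; exists r, e.
  - by have [d hd hBd] := gap_ball_lower hB hy0 (ball_center _ _) hr hBr; exists d, r.
have [m1 hm1] := bound _ hBd; have [m2 hm2] := bound _ hBe.
have hlt := gap_width_lt (m1 + m2) hg1 hg2 hd he.
have hde : i e - i d <= (m1 + m2)%:R * w.
  rewrite natrD mulrDl; have := ler_norm (y0 - i d); have := ler_norm (i e - y0).
  by rewrite distrC; lra.
have : (i e - i d) / (m1 + m2).+1%:R <= w.
  rewrite ler_pdivrMr ?ltr0n //; apply: le_trans hde _.
  by rewrite [w * _]mulrC; apply: ler_wpM2r; [exact: ltW|rewrite ler_nat].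
by move/(lt_le_trans hlt); rewrite ltxx.
Qed.

Lemma gap_ball y0 : gap y0 ->
  gap = ball_at [set x | x != 0 /\ forall r, ~ vle x (y0 - i r)] y0.
Proof.
move=> hy0; apply/seteqP; split=> z hz.
- case: (eqVneq z y0) => [->|hzy]; first by left.
  right; split; first by rewrite subr_eq0 eq_sym.
  by move=> r; apply: gap_vle.
- case: hz => [->|[hz0 hzT]]; first exact: hy0.
  split.
  + move=> d hd; rewrite ltNge; apply/negP => hzd; apply: (hzT d); apply: norm_le_vle.
    by have h := hy0.1 d hd; rewrite !gtr0_norm; lra.
  + move=> e he; rewrite ltNge; apply/negP => hez; apply: (hzT e); apply: norm_le_vle.
    by have h := hy0.2 e he; rewrite !ltr0_norm; lra.
Qed.

Lemma is_ball_gap y0 : gap y0 -> is_ball gap.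
Proof.
move=> hy0; rewrite (gap_ball hy0); eexists _, y0; split=> //.
split=> [x []//|x y [hx0 hx] hy hxy]; split=> // r hr.
by apply: (hx r); exact: vle_trans hxy hr.
Qed.

Lemma ext_cuts_equiv : cut_equiv (ext_upcut D) (ext_lowcut (~` D)).
Proof.
case: (pselect (exists g, gap g)) => [[g hg]|hne].
- right; exists gap; split; first exact: is_ball_gap hg.
  by left; split=> /=; [rewrite (gap_lowD hg)|rewrite (gap_upD hg)].
- by left; apply: cut_ext; exact: gap_empty.
Qed.

End Gap.

Section ExtBall.
Variables (S : set R) (a : R).
Hypothesis hS : vfinal S.
Let B0 := ball_at S a.

(* the ball of [F] whose edges are the images of the edges of [B_S(a, R)] *)
Definition ext_radius := [set y : F | y != 0 /\ forall c, c != 0 -> ~ S c -> ~ vle y (i c)].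
Definition ext_ball := ball_at ext_radius (i a).

Lemma vfinal_ext_radius : vfinal ext_radius.
Proof.
split=> [x []//|x y [hx0 hx] hy hxy]; split=> // c hc hSc hyc.
exact: hx c hc hSc (vle_trans hxy hyc).
Qed.

Lemma is_ball_ext_ball : is_ball ext_ball.
Proof. by exists ext_radius, (i a); split=> //; exact: vfinal_ext_radius. Qed.

Lemma ext_radius_bound x : x != 0 -> ~ ext_radius x ->
  exists t, [/\ 0 < t, ~ S t & i t <= `|x|].
Proof.
move=> hx0 /not_andP [/negP//|/existsNP [c /not_implyP [hc /not_implyP [hSc]]]].
move=> /contrapT [n hn]; have hc0 : 0 < `|c| by rewrite normr_gt0.
have hn0 : (0 : R) < n.+1%:R by rewrite ltr0n.
have ht0 : 0 < `|c| / n.+1%:R by exact: divr_gt0.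
exists (`|c| / n.+1%:R); split=> //.
- move=> ht; apply: hSc; apply: hS.2 ht hc _; exists n.+1.
  by rewrite (gtr0_norm ht0) mulrC divfK ?lt0r_neq0.
- rewrite rmorphM rmorphV ?unitfE ?lt0r_neq0 // rmorph_nat i_norm ler_pdivrMr ?ltr0n //.
  apply: le_trans hn _; rewrite mulrC ler_wpM2l // ler_nat //.
Qed.

Lemma ball_out b : ~ B0 b -> a - b != 0 /\ ~ S (a - b).
Proof. by rewrite /B0 ball_atE => /not_orP [/eqP]. Qed.

Lemma lowD_ext_ball : lowD ext_ball = ext_upD i (lowD B0).
Proof.
apply/seteqP; split=> y /=.
- move=> hy; have hya : y < i a := hy _ (ball_center _ _).
  have hx0 : i a - y != 0 by rewrite subr_eq0 gt_eqF.
  have hnr : ~ ext_radius (i a - y) by move=> h; have := hy y (or_intror h); rewrite ltxx.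
  have [t [ht hSt hit]] := ext_radius_bound hx0 hnr.
  exists (a - t); first exact: lowD_ball_sub.
  by move: hit; rewrite rmorphB gtr0_norm ?subr_gt0 //; lra.
- move=> [d hd hyd] z; rewrite /ext_ball ball_atE => -[/eqP|[_ hz]].
    rewrite subr_eq0 => /eqP <-; apply: le_lt_trans hyd _.
    by rewrite i_lt; exact: hd a (ball_center _ _).
  rewrite ltNge; apply/negP => hzy; have hda : d < a := hd a (ball_center _ _).
  have [hc hSc] : a - d != 0 /\ ~ S (a - d) by apply: ball_out => /hd; rewrite ltxx.
  apply: (hz _ hc hSc); apply: norm_le_vle; rewrite rmorphB.
  have : i d < i a by rewrite i_lt.
  by move=> h; rewrite !gtr0_norm ?subr_gt0 //; lra.
Qed.

Lemma upD_ext_ball : upD ext_ball = ext_lowD i (gtD B0).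
Proof.
apply/seteqP; split=> y /=.
- move=> [z hz hyz] e he; apply: le_lt_trans hyz _.
  have hiae : i a < i e by rewrite i_lt; exact: he a (ball_center _ _).
  move: hz; rewrite /ext_ball ball_atE => -[/eqP|[_ hz]].
    by rewrite subr_eq0 => /eqP <-.
  rewrite ltNge; apply/negP => hez.
  have [hc hSc] : a - e != 0 /\ ~ S (a - e) by apply: ball_out => /he; rewrite ltxx.
  apply: (hz _ hc hSc); apply: norm_le_vle; rewrite rmorphB.
  by rewrite !ltr0_norm ?subr_lt0 //; lra.
- move=> hy; case: (lerP y (i a)) => hya; first by exists (i a) => //; exact: ball_center.
  case: (pselect (ext_radius (i a - y))) => hr; first by exists y => //; right.
  have hx0 : i a - y != 0 by rewrite subr_eq0 lt_eqF.
  have [t [ht hSt hit]] := ext_radius_bound hx0 hr.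
  have := hy _ (gtD_ball_add hS ht hSt).
  by move: hit; rewrite rmorphD ltr0_norm ?subr_lt0 //; lra.
Qed.

Lemma S_dominates r (n : nat) x : S r -> `|x| <= n%:R * `|i r| ->
  exists s, [/\ S s, 0 < s & `|x| <= i s].
Proof.
move=> hr hx; have hr0 : r != 0 := hS.1 _ hr.
have hpos : 0 < n.+1%:R * `|r| by rewrite mulr_gt0 ?ltr0n ?normr_gt0.
exists (n.+1%:R * `|r|); split=> //.
- apply: hS.2 hr (lt0r_neq0 hpos) _; exists n.+1.
  by rewrite normrM normr_id ger0_norm ?ler0n.
- rewrite rmorphM rmorph_nat i_norm; apply: le_trans hx _.
  by apply: ler_wpM2r => //; rewrite ler_nat.
Qed.

Hypothesis vR_convex : forall (x : F) (a b : R), x != 0 -> a != 0 -> b != 0 ->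
  vle (i a) x -> vle x (i b) -> exists2 r : R, r != 0 & veq (i r) x.

(* When [S] is neither empty nor everything, the convexity of [v R] in [v F]
   forces the radius of [ext_ball] to be attained in [S]. *)
Lemma ext_ball_dominated s0 c0 z : S s0 -> c0 != 0 -> ~ S c0 -> ext_ball z ->
  exists s, [/\ S s, 0 < s & `|i a - z| <= i s].
Proof.
move=> hs0 hc0 hSc0; rewrite /ext_ball ball_atE => -[->|[hz0 hz]].
  by apply: (S_dominates (n := 0%N) hs0); rewrite normr0 mul0r.
case: (vle_total (i s0) (i a - z)) => [[n hn]|hv2]; first exact: S_dominates hs0 hn.
have hv3 : vle (i c0) (i a - z).
  by case: (vle_total (i c0) (i a - z)) => // /(hz c0 hc0 hSc0).
have [r hr [[n hn] hr2]] := vR_convex hz0 hc0 (hS.1 _ hs0) hv3 hv2.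
by apply: (S_dominates (r := r) (n := n)) => //; apply: contrapT => /(hz r hr); apply.
Qed.

Lemma ext_lower_edge_no_gap s0 c0 : S s0 -> c0 != 0 -> ~ S c0 ->
  ext_upD i (lowD B0) = ext_lowD i (~` lowD B0).
Proof.
move=> hs0 hc0 hSc0; apply/seteqP; split; first exact: (@ext_upD_sub_ext_lowD (lower_edge B0)).
move=> y hy; rewrite -lowD_ext_ball => z hz.
have [s [hs hs0' hle]] := ext_ball_dominated hs0 hc0 hSc0 hz.
have hb : B0 (a - s) by rewrite /B0 ball_atE opprB addrC subrK; right.
have hnl : ~ lowD B0 (a - s) by move/(_ _ hb); rewrite ltxx.
have := hy _ hnl; rewrite rmorphB.
by have := ler_norm (i a - z); lra.
Qed.

Lemma ext_upper_edge_no_gap s0 c0 : S s0 -> c0 != 0 -> ~ S c0 ->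
  ext_lowD i (gtD B0) = ext_upD i (upD B0).
Proof.
move=> hs0 hc0 hSc0; apply/seteqP; split=> y; last first.
  move=> /= [b' [b hb hb'b] hyb'] e he; apply: le_lt_trans hyb' _.
  by rewrite i_lt; exact: le_lt_trans hb'b (he b hb).
rewrite -upD_ext_ball => -[z hz hyz].
have [s [hs hs0' hle]] := ext_ball_dominated hs0 hc0 hSc0 hz.
have hb : B0 (a + s) by rewrite /B0 ball_atE opprD addrA subrr sub0r; apply: inS0_opp => //; right.
exists (a + s); first by exists (a + s).
by rewrite rmorphD; have := ler_norm (z - i a); rewrite distrC; lra.
Qed.

End ExtBall.

(* the convex hull of [i R]: a ball around [0] *)
Definition hull_radius := [set y : F | y != 0 /\ exists r, vle (i r) y].
Definition hull_ball := ball_at hull_radius 0.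

Lemma is_ball_hull_ball : is_ball hull_ball.
Proof.
exists hull_radius, 0; split=> //; split=> [x []//|x y [hx0 [r hr]] hy hxy].
by split=> //; exists r; exact: vle_trans hr hxy.
Qed.

Lemma hull_ball_i r : hull_ball (i r).
Proof.
rewrite /hull_ball ball_atE /inS0 sub0r; case: (eqVneq (i r) 0) => [->|h].
  by left; rewrite oppr0.
by right; split; [rewrite oppr_eq0|exists r; apply: norm_le_vle; rewrite normrN].
Qed.

Lemma hull_ball_bound z : hull_ball z -> exists r, `|z| <= i r.
Proof.
rewrite /hull_ball ball_atE /inS0 sub0r => -[/eqP|[_ [r [n hn]]]].
  by rewrite oppr_eq0 => /eqP ->; exists 0; rewrite rmorph0 normr0.
by exists (n%:R * `|r|); rewrite rmorphM rmorph_nat i_norm -(normrN z).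
Qed.

Lemma lowD_hull_ball : lowD hull_ball = ext_lowD i setT.
Proof.
apply/seteqP; split=> y /= hy; first by move=> r _; exact: hy _ (hull_ball_i r).
move=> z /hull_ball_bound [r hr]; have := hy (- r) I; rewrite rmorphN.
by have := ler_normr z; have := ler_norm (- z); rewrite normrN; lra.
Qed.

Lemma upD_hull_ball : upD hull_ball = ext_upD i setT.
Proof.
apply/seteqP; split=> y /=.
- move=> [z /hull_ball_bound [r hr] hyz]; exists r => //.
  by have := ler_norm z; lra.
- by move=> [r _ hyr]; exists (i r) => //; exact: hull_ball_i.
Qed.

(** * Necessity *)

Section Necessity.
Variable iota : cut R -> cut F.
Hypothesis iota_cont : full_continuous iota.
Hypothesis iota_restrict : forall C, restrict i (iota C) = cutD C.

Lemma preimage_lecut_below (V : set (cut F)) C : full_open V -> V (iota C) ->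
  (exists d, cutD C d) -> (forall d, cutD C d -> exists2 d', cutD C d' & d < d') ->
  exists2 d, cutD C d & V (iota (lecut d)).
Proof.
move=> hV hVC hne hnomax; have [_ hVo] := iota_cont hV.
have [W [hW hWC hWV]] := hVo C hVC.
by have [d hd /hWV] := basic_open_lecut_below hW hWC hne hnomax; exists d.
Qed.

Lemma preimage_lecut_above (V : set (cut F)) C : full_open V -> V (iota C) ->
  (exists e, ~ cutD C e) -> (forall e, ~ cutD C e -> exists2 e', ~ cutD C e' & e' < e) ->
  exists2 e, ~ cutD C e & V (iota (lecut e)).
Proof.
move=> hV hVC hne hnomin; have [_ hVo] := iota_cont hV.
have [W [hW hWC hWV]] := hVo C hVC.
by have [e he /hWV] := basic_open_lecut_above hW hWC hne hnomin; exists e.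
Qed.

Lemma iota_nonball_cut C : ~ ball_cut C ->
  cutD (iota C) = ext_upD i (cutD C) \/ cutD (iota C) = ext_lowD i (~` cutD C).
Proof.
move=> hnb; apply: contrapT => /not_orP [hlo hhi].
have hlt1 : cut_lt (ext_upcut (cutD C)) (iota C).
  by split; [exact: ext_upD_sub_iota|move/esym].
have hlt2 : cut_lt (iota C) (ext_lowcut (~` cutD C)).
  by split; [exact: iota_sub_ext_lowD|].
have [y hy hny] := cut_ltE hlt1.
have hg : gap C y.
  split; last exact: iota_sub_ext_lowD hy.
  by move=> d hd; rewrite ltNge; apply/negP => h; apply: hny; exists d.
have e1 : lower_edge (gap C) = ext_upcut (cutD C) by apply: cut_ext; exact: gap_lowD hg.
have e2 : upper_edge (gap C) = ext_lowcut (~` cutD C) by apply: cut_ext; exact: gap_upD hg.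
have [_ hVo] := iota_cont (inside_full_open (is_ball_gap hnb hg)).
apply: hnb; apply: (interval_open_singleton hVo) => [|C']; rewrite /preimage /inside e1 e2 //=.
move=> [k1 k2]; case: (cut_trichotomy C' C) => [hl|[//|hl]]; exfalso.
- have [z hz hnz] := cut_ltE k1; exact: hnz (iota_sub_ext_upD iota_restrict hl hz).
- have [z hz hnz] := cut_ltE k2; exact: hnz (ext_lowD_sub_iota iota_restrict hl hz).
Qed.

(* If [iota C] exceeded [D^+_F], it would lie strictly inside the image ball,
   and so would the images of the cuts [(-oo, x]] just below [C]. *)
Lemma iota_lower_edge (B0 D E : set R) C : is_ball B0 -> B0 <> setT ->
  ball_complement B0 D E -> cutD C = lowD B0 -> cutD (iota C) = ext_upD i D.
Proof.
move=> hB hT hbc hC; rewrite (ball_complement_lowD (is_ball_nonempty hB) hbc).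
case: hB hT hbc hC => S [a [hS ->]] hT _ hC.
apply/seteqP; split; last by rewrite -hC; exact: ext_upD_sub_iota.
move=> y hy; apply: contrapT => hny.
have hin : inside (ext_ball S a) (iota C).
  split; first by apply: (cut_lt_mem (y := y)) => //=; rewrite lowD_ext_ball.
  apply: (cut_lt_mem (y := i a)); first by exists (i a) => //; exact: ball_center.
  by move/(iota_mem iota_restrict); rewrite hC => /(_ a (ball_center _ _)); rewrite ltxx.
have hne : exists d, cutD C d by rewrite hC; exact: lowD_ball_nonempty.
have hnomax d : cutD C d -> exists2 d', cutD C d' & d < d'.
  by rewrite hC; exact: lowD_ball_nomax.
have [d hd [hlo _]] :=
  preimage_lecut_below (inside_full_open (is_ball_ext_ball S a)) hin hne hnomax.
have [d' hd' hdd'] := hnomax d hd.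
have [z hz hnz] := cut_ltE hlo; apply: hnz; rewrite /= lowD_ext_ball // -hC.
exact: (iota_sub_ext_upD iota_restrict (lecut_lt_cut hd' hdd') hz).
Qed.

Lemma iota_upper_edge (B0 D E : set R) C : is_ball B0 -> B0 <> setT ->
  ball_complement B0 D E -> cutD C = upD B0 -> cutD (iota C) = ext_lowD i E.
Proof.
move=> hB hT hbc hC; rewrite (ball_complement_gtD (is_ball_nonempty hB) hbc).
case: hB hT hbc hC => S [a [hS ->]] hT _ hC.
have hE : ~` cutD C = gtD (ball_at S a) by rewrite hC setC_upD.
apply/seteqP; split; first by rewrite -hE; exact: iota_sub_ext_lowD.
move=> y hy; apply: contrapT => hny.
have hin : inside (ext_ball S a) (iota C).
  split; last by apply: (cut_lt_mem (y := y)) => //=; rewrite upD_ext_ball.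
  apply: (cut_lt_mem (y := i a)); last by move/(_ _ (ball_center _ _)); rewrite ltxx.
  by apply/(iota_mem iota_restrict); rewrite hC; exists a => //; exact: ball_center.
have hne : exists e, ~ cutD C e.
  by have [e he] := gtD_ball_nonempty hS hT; exists e; rewrite hC; exact: gtD_not_upD.
have hnomin e : ~ cutD C e -> exists2 e', ~ cutD C e' & e' < e.
  rewrite hC => /not_upD /(gtD_ball_nomin hS) [e' he' hlt].
  by exists e' => //; exact: gtD_not_upD.
have [e he [_ hup]] :=
  preimage_lecut_above (inside_full_open (is_ball_ext_ball S a)) hin hne hnomin.
have [z hz hnz] := cut_ltE hup; apply: hnz; move: hz; rewrite /= upD_ext_ball // -hE.
exact: (ext_lowD_sub_iota iota_restrict (cut_lt_lecut he)).
Qed.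

Lemma iota_lecut_not_outside_hull e : ~ outside hull_ball (iota (lecut e)).
Proof.
have hie : cutD (iota (lecut e)) (i e) by apply/(iota_mem iota_restrict) => /=.
move=> [h|h].
- by move: (cut_lt_sub h hie); rewrite /= lowD_hull_ball => /(_ e I); rewrite ltxx.
- apply: (cut_lt_leF h); rewrite /= upD_hull_ball.
  have hlt : cut_lt (lecut e) (lecut (e + 1)).
    by apply: (lecut_lt_cut (x' := e + 1)); rewrite /= ?ltrDl.
  by move=> y /(iota_sub_ext_upD iota_restrict hlt) [d _ hyd]; exists d.
Qed.

(* Otherwise [iota C] would lie outside the convex hull of [i R], and so would
   the images of the cuts [(-oo, e]] with [e] near [-oo]. *)
Lemma iota_bot C : cutD C = set0 -> cutD (iota C) = ext_lowD i setT.
Proof.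
move=> hC; apply/seteqP; split.
  by move=> y /(iota_sub_ext_lowD iota_restrict); rewrite hC setC0.
move=> y hy; apply: contrapT => hny.
have hout : outside hull_ball (iota C).
  by left; apply: (cut_lt_mem (y := y)) => //=; rewrite lowD_hull_ball.
have hne : exists e, ~ cutD C e by exists 0; rewrite hC.
have hnomin e : ~ cutD C e -> exists2 e', ~ cutD C e' & e' < e.
  by move=> _; exists (e - 1); rewrite ?hC // ltrBlDr ltrDl.
have [e _] := preimage_lecut_above (outside_full_open is_ball_hull_ball) hout hne hnomin.
exact: iota_lecut_not_outside_hull.
Qed.

Lemma iota_top C : cutD C = setT -> cutD (iota C) = ext_upD i setT.
Proof.
move=> hC; apply/seteqP; split; last by rewrite -hC; exact: ext_upD_sub_iota.
move=> y hy; apply: contrapT => hny.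
have hout : outside hull_ball (iota C).
  by right; apply: (cut_lt_mem (y := y)) => //=; rewrite upD_hull_ball.
have hne : exists d, cutD C d by exists 0; rewrite hC.
have hnomax d : cutD C d -> exists2 d', cutD C d' & d < d'.
  by move=> _; exists (d + 1); rewrite ?hC // ltrDl.
have [d _] := preimage_lecut_below (outside_full_open is_ball_hull_ball) hout hne hnomax.
exact: iota_lecut_not_outside_hull.
Qed.

End Necessity.

(** * Sufficiency *)

Section Sufficiency.
Hypothesis vR_convex : forall (x : F) (a b : R), x != 0 -> a != 0 -> b != 0 ->
  vle (i a) x -> vle x (i b) -> exists2 r : R, r != 0 & veq (i r) x.
Variable iota : cut R -> cut F.
Hypothesis hnonball : forall C, ~ ball_cut C ->
  cutD (iota C) = ext_upD i (cutD C) \/ cutD (iota C) = ext_lowD i (~` cutD C).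
Hypothesis hlower : forall (B0 D E : set R) C, is_ball B0 -> B0 <> setT ->
  ball_complement B0 D E -> cutD C = lowD B0 -> cutD (iota C) = ext_upD i D.
Hypothesis hupper : forall (B0 D E : set R) C, is_ball B0 -> B0 <> setT ->
  ball_complement B0 D E -> cutD C = upD B0 -> cutD (iota C) = ext_lowD i E.
Hypothesis hbot : forall C, cutD C = set0 -> cutD (iota C) = ext_lowD i setT.
Hypothesis htop : forall C, cutD C = setT -> cutD (iota C) = ext_upD i setT.

Lemma iota_lower_ball S a C : vfinal S -> ball_at S a <> setT ->
  cutD C = lowD (ball_at S a) -> cutD (iota C) = ext_upD i (lowD (ball_at S a)).
Proof.
move=> hS hT hC; have hB : is_ball (ball_at S a) by exists S, a.
exact: hlower hB hT (is_ball_complement hB) hC.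
Qed.

Lemma iota_upper_ball S a C : vfinal S -> ball_at S a <> setT ->
  cutD C = upD (ball_at S a) -> cutD (iota C) = ext_lowD i (gtD (ball_at S a)).
Proof.
move=> hS hT hC; have hB : is_ball (ball_at S a) by exists S, a.
exact: hupper hB hT (is_ball_complement hB) hC.
Qed.

Lemma iota_cases C :
  cutD (iota C) = ext_upD i (cutD C) \/ cutD (iota C) = ext_lowD i (~` cutD C).
Proof.
case: (cut_cases C) => [|[h0|[hT|[[S [a [hS hne hC]]]|[S [a [hS hne hC]]]]]]].
- exact: hnonball.
- by right; rewrite (hbot h0) h0 setC0.
- by left; rewrite (htop hT) hT.
- by left; rewrite (iota_lower_ball hS hne hC) hC.
- by right; rewrite (iota_upper_ball hS hne hC) hC setC_upD.
Qed.

Lemma restrict_iota C : restrict i (iota C) = cutD C.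
Proof.
rewrite /restrict; case: (iota_cases C) => ->.
- exact: restrict_ext_upD.
- exact: restrict_ext_lowD.
Qed.

Lemma iota_inj : injective iota.
Proof. by move=> C1 C2 h; apply: cut_ext; rewrite -(restrict_iota C1) -(restrict_iota C2) h. Qed.

Lemma iota_edges_equiv B C C' : is_ball B -> cutD C = lowD B -> cutD C' = upD B ->
  cut_equiv (iota C) (iota C').
Proof.
move=> hB hC hC'; right.
case: (pselect (B = setT)) => hT.
- exists hull_ball; split; first exact: is_ball_hull_ball.
  left; split.
  + by rewrite lowD_hull_ball hbot // hC hT lowD_setT.
  + by rewrite upD_hull_ball htop // hC' hT upD_setT.
- case: hB hT hC hC' => S [a [hS ->]] hT hC hC'.
  exists (ext_ball S a); split; first exact: is_ball_ext_ball.
  left; split.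
  + by rewrite lowD_ext_ball // (iota_lower_ball hS hT hC).
  + by rewrite upD_ext_ball // (iota_upper_ball hS hT hC').
Qed.

Lemma full_preimage (U : set (cut F)) : full U -> full (iota @^-1` U).
Proof.
move=> hU C1 C2 hC1 [<-//|[B [hB [[k1 k2]|[k1 k2]]]]].
- exact: hU hC1 (iota_edges_equiv hB k1 k2).
- exact: hU hC1 (cut_equiv_sym (iota_edges_equiv hB k2 k1)).
Qed.

(* [L] is [iota C] itself, or [D^+_F] when [iota C = E^-_F]; the latter happens
   for non-ball cuts and for upper edges of singletons. *)
Lemma iota_left_witness C : cutD C <> set0 -> exists L, [/\ cut_equiv (iota C) L,
  forall y, cutD L y -> exists2 d, cutD C d & y <= i d &
  forall C', cut_lt C' C -> cutD (iota C') `<=` cutD L].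
Proof.
move=> h0; case: (pselect (cutD (iota C) = ext_upD i (cutD C))) => hlo.
  exists (iota C); split; [by left|by rewrite hlo => y [d hd hyd]; exists d|].
  by move=> C' /cut_lt_sub h; exact: (iota_mono restrict_iota h).
case: (cut_cases C) => [hnb|[//|[hT|[[S [a [hS hne hC]]]|[S [a [hS hne hC]]]]]]].
- exists (ext_upcut (cutD C)); split; last 2 first.
  + by move=> y [d hd hyd]; exists d.
  + by move=> C' hlt; exact: (iota_sub_ext_upD restrict_iota hlt).
  case: (hnonball hnb) => // h; rewrite (cut_ext (Y := ext_lowcut (~` cutD C)) h).
  exact: cut_equiv_sym (ext_cuts_equiv hnb).
- by case: hlo; rewrite (htop hT) hT.
- by case: hlo; rewrite (iota_lower_ball hS hne hC) hC.
case: (pselect (exists s, S s)) => [[s0 hs0]|/forallNP hSe].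
  case: hlo; have [c0 hc0 hSc0] := ball_neq_setT hne.
  by rewrite (iota_upper_ball hS hne hC) (ext_upper_edge_no_gap a hS vR_convex hs0 hc0 hSc0) hC.
have hB : is_ball (ball_at S a) by exists S, a.
exists (iota (lower_edge (ball_at S a))); split.
- exact/cut_equiv_sym/(iota_edges_equiv hB).
- move=> y; rewrite (iota_lower_ball (C := lower_edge _) hS hne (erefl _)).
  move=> [d hd hyd]; exists d => //.
  by rewrite hC; exact: lowD_sub_upD (ball_center _ _) _ hd.
- move=> C' hlt; apply: (iota_mono restrict_iota) => x hx /= b /(ball_set0 hSe) ->.
  rewrite ltNge; apply/negP => hax; have [w] := cut_ltE hlt.
  by rewrite hC => -[b' /(ball_set0 hSe) -> hwa]; apply; apply: cutP (cutP hx hax) hwa.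
Qed.

Lemma iota_right_witness C : cutD C <> setT -> exists L, [/\ cut_equiv (iota C) L,
  forall y, ~ cutD L y -> exists2 e, ~ cutD C e & i e <= y &
  forall C', cut_lt C C' -> cutD L `<=` cutD (iota C')].
Proof.
move=> hT; have hLE (A : set R) y : ~ ext_lowD i A y -> exists2 e, A e & i e <= y.
  by move/existsPNP => [e he /negP]; rewrite -leNgt; exists e.
case: (pselect (cutD (iota C) = ext_lowD i (~` cutD C))) => hhi.
  exists (iota C); split; [by left|by rewrite hhi => y /hLE|].
  by move=> C' /cut_lt_sub h; exact: (iota_mono restrict_iota h).
case: (cut_cases C) => [hnb|[h0|[//|[[S [a [hS hne hC]]]|[S [a [hS hne hC]]]]]]].
- exists (ext_lowcut (~` cutD C)); split; last 2 first.
  + exact: hLE.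
  + by move=> C' hlt; exact: (ext_lowD_sub_iota restrict_iota hlt).
  case: (hnonball hnb) => // h; rewrite (cut_ext (Y := ext_upcut (cutD C)) h).
  exact: ext_cuts_equiv hnb.
- by case: hhi; rewrite (hbot h0) h0 setC0.
- case: (pselect (exists s, S s)) => [[s0 hs0]|/forallNP hSe].
    case: hhi; have [c0 hc0 hSc0] := ball_neq_setT hne.
    by rewrite (iota_lower_ball hS hne hC) (ext_lower_edge_no_gap a hS vR_convex hs0 hc0 hSc0) hC.
  have hB : is_ball (ball_at S a) by exists S, a.
  exists (iota (upper_edge (ball_at S a))); split.
  + exact: iota_edges_equiv hB hC _.
  + move=> y; rewrite (iota_upper_ball (C := upper_edge _) hS hne (erefl _)).
    move=> /hLE [e he hey]; exists e => //.
    by rewrite hC => /(_ a (ball_center _ _)); rewrite ltNge (ltW (he a (ball_center _ _))).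
  + move=> C' hlt; apply: (iota_mono restrict_iota) => x /= [b /(ball_set0 hSe) -> hxa].
    have [w hw] := cut_ltE hlt; rewrite hC => /not_lowD [b' /(ball_set0 hSe) -> haw].
    exact: cutP (cutP hw haw) hxa.
- by case: hhi; rewrite (iota_upper_ball hS hne hC) hC setC_upD.
Qed.

Lemma iota_full_continuous : full_continuous iota.
Proof.
move=> U [hUf hUo]; split; first exact: full_preimage.
move=> C hC; apply: nbhd_interval_open => //.
- case: (pselect (cutD C = set0)) => h0.
    by left=> C' /cut_le_eqVlt [->//|/cut_ltE [y]]; rewrite h0.
  have [L [hCL hLC hbelow]] := iota_left_witness h0.
  have [hL _] := interval_open_nbhd hUo (hUf _ _ hC hCL).
  exact: (left_nbhd_preimage restrict_iota hC hL hLC hbelow).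
- case: (pselect (cutD C = setT)) => hT.
    by left=> C' /cut_le_eqVlt [<-//|/cut_ltE [y _]]; rewrite hT => /(_ I).
  have [L [hCL hLC habove]] := iota_right_witness hT.
  have [_ hR] := interval_open_nbhd hUo (hUf _ _ hC hCL).
  exact: (right_nbhd_preimage restrict_iota hC hR hLC habove).
Qed.

End Sufficiency.

End Embedding.

Unset Implicit Arguments. Set Strict Implicit. Set Printing Implicit Defensive.

Theorem proposition4p8 (R F : realFieldType) (i : {rmorphism R -> F})
  (i_mono : {mono i : x y / x <= y})
  (vR_convex : forall (x : F) (a b : R), x != 0 -> a != 0 -> b != 0 ->
      vle (i a) x -> vle x (i b) -> exists2 r : R, r != 0 & veq (i r) x)
  (iota : cut R -> cut F) :
  (injective iota /\ full_continuous iota /\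
   (forall C, restrict i (iota C) = cutD C)) <->
  [/\ (forall C : cut R, ~ ball_cut C ->
         cutD (iota C) = ext_upD i (cutD C) \/
         cutD (iota C) = ext_lowD i (~` cutD C)),
      (forall (B0 D E : set R) (C : cut R), is_ball B0 -> B0 <> setT ->
         ball_complement B0 D E -> cutD C = lowD B0 ->
         cutD (iota C) = ext_upD i D),
      (forall (B0 D E : set R) (C : cut R), is_ball B0 -> B0 <> setT ->
         ball_complement B0 D E -> cutD C = upD B0 ->
         cutD (iota C) = ext_lowD i E),
      (forall C : cut R, cutD C = set0 -> cutD (iota C) = ext_lowD i setT) &
      (forall C : cut R, cutD C = setT -> cutD (iota C) = ext_upD i setT)].
Proof.
split=> [[_ [hcont hres]]|[hnb hlo hup hbot htop]].
- split.
  + exact: (iota_nonball_cut i_mono hcont hres).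
  + exact: (iota_lower_edge i_mono hcont hres).
  + exact: (iota_upper_edge i_mono hcont hres).
  + exact: (iota_bot i_mono hcont hres).
  + exact: (iota_top i_mono hcont hres).
- split; [exact: (iota_inj i_mono hnb hlo hup hbot htop)|split].
  + exact: (iota_full_continuous i_mono vR_convex hnb hlo hup hbot htop).
  + exact: (restrict_iota i_mono hnb hlo hup hbot htop).
Qed.
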